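(* Let $a,b\in\mathbb{Z}^+$ with $a$ odd, and let $q$ be complex with $|q|<1$. If $b$ is even, then $$\sum_{n=0}^{\infty}N(a,3a,4b;8n+5a)q^n=4q^a\psi(q^a)\psi(q^{12a})\varphi(q^{b/2}),\qquad \sum_{n=0}^{\infty}N(a,3a,4b;8n+7a)q^n=4\psi(q^{3a})\psi(q^{4a})\varphi(q^{b/2}).$$ If $b$ is odd, then $$\begin{aligned}\sum_{n=0}^{\infty}N(a,3a,4b;8n)q^n&=\varphi(q^{2a})\varphi(q^{6a})\varphi(q^{2b})+4q^{2a}\psi(q^{4a})\psi(q^{12a})\varphi(q^{2b})\\&\quad+12q^{(a+b)/2}\big(\varphi(q^{6a})\psi(q^{4a})+q^a\varphi(q^{2a})\psi(q^{12a})\big)\psi(q^{4b}),\\ \sum_{n=0}^{\infty}N(a,3a,4b;8n+4)q^n&=2q^{(b-1)/2}\varphi(q^{2a})\varphi(q^{6a})\psi(q^{4b})+8q^{2a+(b-1)/2}\psi(q^{4a})\psi(q^{12a})\psi(q^{4b})\\&\quad+6q^{(a-1)/2}\big(\varphi(q^{6a})\psi(q^{4a})+q^a\varphi(q^{2a})\psi(q^{12a})\big)\varphi(q^{2b}).\end{aligned}$$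
   Context: $\mathbb{Z}^+$ is the set of positive integers. For $a,b,c\in\mathbb{Z}^+$ and nonnegative integer $n$, $N(a,b,c;n)$ denotes the number of triples $(x,y,z)\in\mathbb{Z}^3$ with $n=ax^2+by^2+cz^2$ (and $N(a,b,c;n)=0$ for negative $n$). Ramanujan's theta functions are $\varphi(q)=\sum_{n=-\infty}^{\infty}q^{n^2}$ and $\psi(q)=\sum_{n=0}^{\infty}q^{n(n+1)/2}$ for $|q|<1$. *)

From Stdlib Require Import Reals ZArith List Arith.
From Coquelicot Require Import Coquelicot.

(* Sum of a (convergent) complex series, taken componentwise:
   the real part is the sum of the real parts, the imaginary part the sum of
   the imaginary parts.  (A complex series converges iff both component
   series converge, and then its sum is this value.) *)
Definition CSeries (u : nat -> C) : C :=
  (Series (fun n => fst (u n)), Series (fun n => snd (u n))).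

(* Ramanujan's phi(q) = sum_{n in Z} q^(n^2) = 1 + 2 sum_{n>=1} q^(n^2)
   (the terms for n and -n coincide). *)
Definition rphi (q : C) : C :=
  CSeries (fun n => if Nat.eqb n 0 then RtoC 1 else Cmult (RtoC 2) (Cpow q (n * n))).

Definition rpsi (q : C) : C :=
  CSeries (fun n => Cpow q (n * (n + 1) / 2)).

Definition zrange (m : nat) : list Z :=
  map (fun k => (Z.of_nat k - Z.of_nat m)%Z) (seq 0 (2 * m + 1)).

(* N(a,b,c;n) = #{(x,y,z) in Z^3 | n = a x^2 + b y^2 + c z^2}.
   For a,b,c >= 1 (the only case used), every solution has |x|,|y|,|z| <= n
   (since |x| <= x^2 <= n), so counting over [-n,n]^3 counts all of Z^3. *)
Definition Nrep (a b c n : nat) : nat :=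
  length (filter
    (fun t : Z * Z * Z =>
       let '(x, y, z) := t in
       Z.eqb (Z.of_nat n)
             (Z.of_nat a * x * x + Z.of_nat b * y * y + Z.of_nat c * z * z)%Z)
    (list_prod (list_prod (zrange n) (zrange n)) (zrange n))).

(* Sort the solutions of [a x^2 + 3a y^2 + 4b z^2 = 8n + r] by the residues of [x, y, z]
   mod 4; for odd [a] only a few residue patterns are compatible with [r].  On most
   patterns every coordinate is [d u] with [u] either arbitrary or odd, the equation
   becomes [n = (sum of terms k u^2 or k (u^2 - 1)/8) + constant], and the pattern is
   counted by the coefficient of [q^n] in a product of three series [q^s phi(q^k)] or
   [2 q^s psi(q^k)].  The pattern with [x] and [y] odd is not of this form; the involution
   [(x, y) -> ((x + 3y)/2, (x - y)/2)], which preserves [x^2 + 3y^2], shows that it holds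
   twice as many solutions as the two patterns with [x, y] even and [x^2 + 3y^2 = 4 mod 8],
   whence the factors 12 and 6. *)

From Stdlib Require Import Reals ZArith List Arith Lia Lra Bool.
From Coquelicot Require Import Coquelicot.
Import ListNotations.

Ltac ring_C := change (?x = ?y) with (@eq C x y); ring.
Ltac ring_R := change (?x = ?y) with (@eq R x y); ring.

(** * Complex series and generating functions *)

Lemma sum_n_fst (u : nat -> C) n : fst (sum_n u n) = sum_n (fun k => fst (u k)) n.
Proof. induction n; [now rewrite !sum_O | now rewrite !sum_Sn, <- IHn]. Qed.

Lemma sum_n_snd (u : nat -> C) n : snd (sum_n u n) = sum_n (fun k => snd (u k)) n.
Proof. induction n; [now rewrite !sum_O | now rewrite !sum_Sn, <- IHn]. Qed.

Lemma is_series_C_intro (u : nat -> C) (l : C) :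
  is_series (fun n => fst (u n)) (fst l) -> is_series (fun n => snd (u n)) (snd l) ->
  is_series u l.
Proof.
  intros Hre Him. apply filterlim_locally. intros eps.
  destruct (proj1 (filterlim_locally _ _) Hre eps) as [N1 H1].
  destruct (proj1 (filterlim_locally _ _) Him eps) as [N2 H2].
  exists (max N1 N2). intros n Hn. split.
  - rewrite sum_n_fst. apply H1. lia.
  - rewrite sum_n_snd. apply H2. lia.
Qed.

Lemma is_series_C_elim (u : nat -> C) (l : C) : is_series u l ->
  is_series (fun n => fst (u n)) (fst l) /\ is_series (fun n => snd (u n)) (snd l).
Proof.
  intros H. split; apply filterlim_locally; intros eps;
    destruct (proj1 (filterlim_locally _ _) H eps) as [N HN];
    exists N; intros n Hn; destruct (HN n Hn) as [Hre Him].
  - now rewrite <- sum_n_fst.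
  - now rewrite <- sum_n_snd.
Qed.

Lemma Rabs_fst_le_Cmod (z : C) : Rabs (fst z) <= Cmod z.
Proof. eapply Rle_trans; [apply Rmax_l | apply Rmax_Cmod]. Qed.

Lemma Rabs_snd_le_Cmod (z : C) : Rabs (snd z) <= Cmod z.
Proof. eapply Rle_trans; [apply Rmax_r | apply Rmax_Cmod]. Qed.

Lemma ex_series_Rabs_of_Cmod (a : nat -> C) (f : C -> R) :
  (forall z, Rabs (f z) <= Cmod z) -> ex_series (fun n => Cmod (a n)) ->
  ex_series (fun n => Rabs (f (a n))).
Proof.
  intros Hf Ha.
  apply (@ex_series_le R_AbsRing R_CompleteNormedModule _ (fun n => Cmod (a n))); [|exact Ha].
  intros n. change norm with Rabs. rewrite Rabs_Rabsolu. apply Hf.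
Qed.

Lemma is_series_C_mult (a b : nat -> C) (A B : C) :
  is_series a A -> is_series b B ->
  ex_series (fun n => Cmod (a n)) -> ex_series (fun n => Cmod (b n)) ->
  is_series (fun n => sum_n (fun k => Cmult (a k) (b (n - k)%nat)) n) (Cmult A B).
Proof.
  intros HA HB Ha Hb.
  destruct (is_series_C_elim _ _ HA) as [HAr HAi].
  destruct (is_series_C_elim _ _ HB) as [HBr HBi].
  pose proof (ex_series_Rabs_of_Cmod a fst Rabs_fst_le_Cmod Ha) as Xar.
  pose proof (ex_series_Rabs_of_Cmod a snd Rabs_snd_le_Cmod Ha) as Xai.
  pose proof (ex_series_Rabs_of_Cmod b fst Rabs_fst_le_Cmod Hb) as Xbr.
  pose proof (ex_series_Rabs_of_Cmod b snd Rabs_snd_le_Cmod Hb) as Xbi.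
  apply is_series_C_intro; cbn [Cmult fst snd].
  - pose proof (is_series_minus _ _ _ _ (is_series_mult _ _ _ _ HAr HBr Xar Xbr)
                                        (is_series_mult _ _ _ _ HAi HBi Xai Xbi)) as H.
    eapply is_series_ext; [|exact H]. intros n.
    rewrite sum_n_fst, sum_n_Reals. change (plus ?x (opp ?y)) with (x - y).
    rewrite <- minus_sum. apply sum_eq. intros k _. reflexivity.
  - pose proof (is_series_plus _ _ _ _ (is_series_mult _ _ _ _ HAr HBi Xar Xbi)
                                       (is_series_mult _ _ _ _ HAi HBr Xai Xbr)) as H.
    eapply is_series_ext; [|exact H]. intros n.
    rewrite sum_n_snd, sum_n_Reals. change (plus ?x ?y) with (x + y).
    rewrite <- plus_sum. apply sum_eq. intros k _. reflexivity.
Qed.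

Definition conv (c d : nat -> nat) (n : nat) : nat :=
  list_sum (map (fun k => c k * d (n - k))%nat (seq 0 (S n))).

Lemma INR_list_sum_seq (f : nat -> nat) n :
  INR (list_sum (map f (seq 0 (S n)))) = sum_f_R0 (fun k => INR (f k)) n.
Proof.
  induction n as [|n IH]; [simpl; now rewrite Nat.add_0_r|].
  rewrite seq_S, map_app, list_sum_app, plus_INR, IH. simpl. now rewrite Nat.add_0_r.
Qed.

Lemma INR_conv (c d : nat -> nat) n :
  INR (conv c d n) = sum_f_R0 (fun k => INR (c k) * INR (d (n - k)%nat)) n.
Proof. unfold conv. rewrite INR_list_sum_seq. apply sum_eq. intros. apply mult_INR. Qed.

Definition is_gf (c : nat -> nat) (q : C) (A : C) : Prop :=
  is_series (fun n => Cmult (RtoC (INR (c n))) (Cpow q n)) A /\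
  ex_series (fun n => INR (c n) * Cmod q ^ n).

Lemma is_gf_ext (c d : nat -> nat) q A : (forall n, c n = d n) -> is_gf c q A -> is_gf d q A.
Proof.
  intros E [Hs Ha]. split.
  - eapply is_series_ext; [|exact Hs]. intros n; cbv beta. now rewrite E.
  - eapply ex_series_ext; [|exact Ha]. intros n; cbv beta. now rewrite E.
Qed.

Lemma is_gf_plus (c d : nat -> nat) q A B :
  is_gf c q A -> is_gf d q B -> is_gf (fun n => (c n + d n)%nat) q (Cplus A B).
Proof.
  intros [Hc Hca] [Hd Hda]. split.
  - eapply is_series_ext; [|exact (is_series_plus _ _ _ _ Hc Hd)].
    intros n. rewrite plus_INR, RtoC_plus. change plus with Cplus. ring_C.
  - eapply ex_series_ext; [|exact (ex_series_plus _ _ Hca Hda)].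
    intros n. rewrite plus_INR. change plus with Rplus. ring_R.
Qed.

Lemma is_gf_scal (k : nat) (c : nat -> nat) q A :
  is_gf c q A -> is_gf (fun n => (k * c n)%nat) q (Cmult (RtoC (INR k)) A).
Proof.
  intros [Hc Hca]. split.
  - eapply is_series_ext; [|exact (is_series_scal_l (RtoC (INR k)) _ _ Hc)].
    intros n. rewrite mult_INR, RtoC_mult. change scal with Cmult. ring_C.
  - eapply ex_series_ext; [|exact (ex_series_scal_l (INR k) _ Hca)].
    intros n. rewrite mult_INR. change scal with Rmult. ring_R.
Qed.

Lemma sum_n_RtoC_mult (f : nat -> R) (z : C) n :
  Cmult (RtoC (sum_n f n)) z = sum_n (fun k => Cmult (RtoC (f k)) z) n.
Proof.
  induction n as [|n IH]; [now rewrite !sum_O|].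
  rewrite !sum_Sn, <- IH. change (RtoC (plus ?x ?y)) with (RtoC (Rplus x y)).
  rewrite RtoC_plus. change plus with Cplus. ring_C.
Qed.

Lemma is_gf_conv (c d : nat -> nat) q A B :
  is_gf c q A -> is_gf d q B -> is_gf (conv c d) q (Cmult A B).
Proof.
  intros [Hc Hca] [Hd Hda].
  assert (Habs : forall e : nat -> nat, ex_series (fun n => INR (e n) * Cmod q ^ n) ->
            ex_series (fun n => Cmod (Cmult (RtoC (INR (e n))) (Cpow q n)))).
  { intros e He. eapply ex_series_ext; [|exact He]. intros n.
    now rewrite Cmod_mult, Cmod_R, Cmod_pow, Rabs_pos_eq by apply pos_INR. }
  split.
  - eapply is_series_ext; [|exact (is_series_C_mult _ _ _ _ Hc Hd (Habs c Hca) (Habs d Hda))].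
    intros n. rewrite INR_conv, <- sum_n_Reals, sum_n_RtoC_mult.
    apply sum_n_ext_loc. intros k Hk.
    replace (Cpow q n) with (Cmult (Cpow q k) (Cpow q (n - k))) by
      (rewrite <- Cpow_add_r; f_equal; lia).
    rewrite RtoC_mult. ring_C.
  - destruct Hca as [la Hla], Hda as [lb Hlb].
    eexists. eapply is_series_ext; [|apply (is_series_mult_pos _ _ _ _ Hla Hlb)].
    + intros n. rewrite INR_conv, (Rmult_comm (sum_f_R0 _ n)), scal_sum. apply sum_eq.
      intros k Hk. assert (E : Cmod q ^ n = Cmod q ^ k * Cmod q ^ (n - k))
        by (rewrite <- pow_add; f_equal; lia).
      rewrite E. ring.
    + intros n. apply Rmult_le_pos; [apply pos_INR | apply pow_le, Cmod_ge_0].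
    + intros n. apply Rmult_le_pos; [apply pos_INR | apply pow_le, Cmod_ge_0].
Qed.

Section Spread.
Context {K : AbsRing} {V : NormedModule K}.
Variable e : nat -> nat.
Hypothesis e_incr : forall n, (e n < e (S n))%nat.
Variables a b : nat -> V.
Hypothesis b_on_image : forall n, b (e n) = a n.
Hypothesis b_off_image : forall m, (forall n, e n <> m) -> b m = zero.

Lemma incr_seq_le i j : (i <= j)%nat -> (e i <= e j)%nat.
Proof. induction 1 as [|j _ IH]; [lia | specialize (e_incr j); lia]. Qed.

Lemma incr_seq_ge n : (n + e 0 <= e n)%nat.
Proof. induction n as [|n IH]; [lia | specialize (e_incr n); lia]. Qed.

Lemma sum_n_spread_below M : (M < e 0)%nat -> sum_n b M = zero.
Proof.
  assert (Hoff : forall m, (m < e 0)%nat -> b m = zero).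
  { intros m Hm. apply b_off_image. intros n E. pose proof (incr_seq_le 0 n). lia. }
  induction M as [|M IH]; intros HM.
  - rewrite sum_O. apply Hoff. lia.
  - rewrite sum_Sn, IH, Hoff by lia. apply plus_zero_l.
Qed.

Lemma sum_n_spread M n : (e n <= M < e (S n))%nat -> sum_n b M = sum_n a n.
Proof.
  revert n. induction M as [|M IH]; intros n Hn.
  - assert (n = 0)%nat by (pose proof (incr_seq_ge n); lia). subst.
    rewrite !sum_O. replace 0%nat with (e 0) at 1 by lia. apply b_on_image.
  - destruct (Nat.eq_dec (e n) (S M)) as [E|E].
    + rewrite sum_Sn, <- E, b_on_image. destruct n as [|n].
      * now rewrite sum_n_spread_below, plus_zero_l, sum_O by lia.
      * rewrite (IH n) by (specialize (e_incr n); lia). now rewrite sum_Sn.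
    + rewrite sum_Sn, (IH n) by lia. rewrite b_off_image; [apply plus_zero_r|].
      intros j. destruct (le_lt_dec j n).
      * pose proof (incr_seq_le j n). lia.
      * pose proof (incr_seq_le (S n) j). lia.
Qed.

Lemma incr_seq_interval M : (e 0 <= M)%nat -> exists n, (e n <= M < e (S n))%nat.
Proof.
  induction M as [|M IH]; intros HM.
  - exists 0%nat. specialize (e_incr 0). lia.
  - destruct (Nat.eq_dec (e 0) (S M)) as [E|E].
    + exists 0%nat. specialize (e_incr 0). lia.
    + destruct IH as [n Hn]; [lia|].
      destruct (Nat.eq_dec (e (S n)) (S M)).
      * exists (S n). specialize (e_incr (S n)). lia.
      * exists n. lia.
Qed.

Lemma is_series_spread L : is_series a L -> is_series b L.
Proof.
  intros H. apply filterlim_locally. intros eps.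
  destruct (proj1 (filterlim_locally _ _) H eps) as [N HN].
  exists (e N). intros M HM.
  destruct (incr_seq_interval M) as [n Hn]; [pose proof (incr_seq_le 0 N); lia|].
  rewrite (sum_n_spread M n Hn). apply HN.
  destruct (le_lt_dec N n) as [|Hlt]; [assumption|].
  pose proof (incr_seq_le (S n) N Hlt). lia.
Qed.

End Spread.

Lemma pow_le_antimono r m n : 0 <= r <= 1 -> (m <= n)%nat -> r ^ n <= r ^ m.
Proof.
  intros Hr H. replace n with (m + (n - m))%nat by lia. rewrite pow_add.
  rewrite <- (Rmult_1_r (r ^ m)) at 2. apply Rmult_le_compat_l; [apply pow_le; lra|].
  rewrite <- (pow1 (n - m)). apply pow_incr. lra.
Qed.

Lemma ex_series_twice_geom r : 0 <= r < 1 -> ex_series (fun n => 2 * r ^ n).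
Proof.
  intros Hr. eexists. apply (@is_series_scal_l R_AbsRing R_NormedModule 2 (fun n => r ^ n)).
  apply is_series_geom. rewrite Rabs_pos_eq; lra.
Qed.

Lemma is_series_CSeries (t : nat -> C) r :
  0 <= r < 1 -> (forall n, Cmod (t n) <= 2 * r ^ n) -> is_series t (CSeries t).
Proof.
  intros Hr Ht.
  assert (Hdom : forall f : C -> R, (forall z, Rabs (f z) <= Cmod z) ->
            ex_series (fun n => f (t n))).
  { intros f Hf. apply (@ex_series_le R_AbsRing R_CompleteNormedModule _ (fun n => 2 * r ^ n)).
    - intros n. eapply Rle_trans; [apply Hf | apply Ht].
    - now apply ex_series_twice_geom. }
  apply is_series_C_intro; apply Series_correct, Hdom.
  - exact Rabs_fst_le_Cmod.
  - exact Rabs_snd_le_Cmod.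
Qed.

(* The sum is the reindexed series; absolute convergence by comparison with [2 |q|^n]. *)
Lemma is_gf_sparse (e w c : nat -> nat) (q : C) (V : C) :
  Cmod q < 1 -> (forall n, (e n < e (S n))%nat) -> (forall n, (w n <= 2)%nat) ->
  (forall n, c (e n) = w n) -> (forall m, (forall n, e n <> m) -> c m = 0%nat) ->
  is_series (fun n => Cmult (RtoC (INR (w n))) (Cpow q (e n))) V ->
  is_gf c q V.
Proof.
  intros Hq He Hw Hon Hoff HV. split.
  - apply (is_series_spread e He (fun n => Cmult (RtoC (INR (w n))) (Cpow q (e n)))); auto.
    + intros n. now rewrite Hon.
    + intros m Hm. rewrite Hoff by exact Hm. change (zero : C) with (RtoC 0).
      cbn [INR]. ring_C.
  - set (r := Cmod q). assert (Hr : 0 <= r < 1) by (split; [apply Cmod_ge_0 | exact Hq]).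
    assert (Hw2 : ex_series (fun n => INR (w n) * r ^ (e n))).
    { apply (@ex_series_le R_AbsRing R_CompleteNormedModule _ (fun n => 2 * r ^ n));
        [|now apply ex_series_twice_geom].
      intros n. change norm with Rabs.
      rewrite Rabs_pos_eq by (apply Rmult_le_pos; [apply pos_INR | apply pow_le; lra]).
      apply Rmult_le_compat; [apply pos_INR | apply pow_le; lra | |].
      - replace 2 with (INR 2) by (simpl; lra). now apply le_INR.
      - apply pow_le_antimono; [lra|]. pose proof (incr_seq_ge e He n). lia. }
    destruct Hw2 as [l Hl]. exists l.
    apply (is_series_spread e He (fun n => INR (w n) * r ^ (e n))); auto.
    + intros n. now rewrite Hon.
    + intros m Hm. rewrite Hoff by exact Hm. cbn [INR]. change (zero : R) with 0. ring_R.
Qed.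

Definition count {A} (P : A -> bool) (L : list A) : nat := length (filter P L).

Lemma count_cons {A} (P : A -> bool) a L :
  count P (a :: L) = ((if P a then 1 else 0) + count P L)%nat.
Proof. unfold count; simpl. now destruct (P a). Qed.

Lemma count_app {A} (P : A -> bool) L1 L2 : count P (L1 ++ L2) = (count P L1 + count P L2)%nat.
Proof. unfold count. now rewrite filter_app, length_app. Qed.

Lemma count_map {A B} (P : B -> bool) (f : A -> B) L :
  count P (map f L) = count (fun x => P (f x)) L.
Proof. induction L as [|a L IH]; [reflexivity|]. simpl map. now rewrite !count_cons, IH. Qed.

Lemma count_ext_in {A} (P Q : A -> bool) L :
  (forall x, In x L -> P x = Q x) -> count P L = count Q L.
Proof. intros H. unfold count. f_equal. now apply filter_ext_in. Qed.

Lemma count_zero {A} (P : A -> bool) L : (forall x, In x L -> P x = false) -> count P L = 0%nat.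
Proof.
  induction L as [|a L IH]; intros H; [reflexivity|].
  rewrite count_cons, H, IH; [reflexivity | |now left].
  intros x Hx. apply H. now right.
Qed.

Lemma count_split {A} (P Q : A -> bool) L :
  count P L = (count (fun x => P x && Q x) L + count (fun x => P x && negb (Q x)) L)%nat.
Proof.
  induction L as [|a L IH]; [reflexivity|].
  rewrite !count_cons, IH. destruct (P a), (Q a); simpl; lia.
Qed.

Lemma count_le_inj {A B} (P : A -> bool) (Q : B -> bool) L1 L2 (f : A -> B) (g : B -> A) :
  NoDup L1 -> (forall y, Q y = true -> In y L2) ->
  (forall x, P x = true -> Q (f x) = true /\ g (f x) = x) ->
  (count P L1 <= count Q L2)%nat.
Proof.
  intros N1 HQ Hf. unfold count. rewrite <- (length_map f).
  apply NoDup_incl_length.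
  - apply NoDup_map_NoDup_ForallPairs; [|now apply NoDup_filter].
    intros x y Hx Hy E. apply filter_In in Hx, Hy.
    rewrite <- (proj2 (Hf x (proj2 Hx))), <- (proj2 (Hf y (proj2 Hy))). now f_equal.
  - intros y Hy. apply in_map_iff in Hy as [x [<- Hx]]. apply filter_In in Hx.
    apply filter_In. split; [apply HQ|]; apply Hf; tauto.
Qed.

Lemma count_bij {A B} (P : A -> bool) (Q : B -> bool) L1 L2 (f : A -> B) (g : B -> A) :
  NoDup L1 -> NoDup L2 -> (forall x, P x = true -> In x L1) -> (forall y, Q y = true -> In y L2) ->
  (forall x, P x = true -> Q (f x) = true /\ g (f x) = x) ->
  (forall y, Q y = true -> P (g y) = true /\ f (g y) = y) ->
  count P L1 = count Q L2.
Proof.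
  intros. apply Nat.le_antisymm;
    [apply (count_le_inj P Q L1 L2 f g) | apply (count_le_inj Q P L2 L1 g f)]; auto.
Qed.

Lemma count_same {A} (P : A -> bool) L1 L2 : NoDup L1 -> NoDup L2 ->
  (forall x, P x = true -> In x L1) -> (forall x, P x = true -> In x L2) -> count P L1 = count P L2.
Proof. intros. apply (count_bij P P L1 L2 (fun x => x) (fun x => x)); auto. Qed.

Lemma count_list_prod {A B} (R : A -> B -> bool) L1 L2 :
  count (fun p => R (fst p) (snd p)) (list_prod L1 L2) =
  list_sum (map (fun a => count (R a) L2) L1).
Proof.
  induction L1 as [|a L1 IH]; [reflexivity|].
  simpl list_prod. now rewrite count_app, count_map, IH.
Qed.

Lemma count_list_prod_andb {A B} (P : A -> bool) (Q : B -> bool) L1 L2 :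
  count (fun p => P (fst p) && Q (snd p)) (list_prod L1 L2) = (count P L1 * count Q L2)%nat.
Proof.
  rewrite (count_list_prod (fun a b => P a && Q b)).
  induction L1 as [|a L1 IH]; [reflexivity|].
  simpl. rewrite IH, count_cons. destruct (P a); [reflexivity|]. simpl. now rewrite count_zero.
Qed.

Lemma count_partition {A B} (P : A -> bool) (cl : B -> A -> bool) (Cs : list B) L :
  (forall t, P t = true -> count (fun C => cl C t) Cs = 1%nat) ->
  count P L = list_sum (map (fun C => count (fun t => P t && cl C t) L) Cs).
Proof.
  intros HP. induction L as [|t L IH].
  - clear HP. induction Cs as [|C Cs IHC]; [reflexivity | exact IHC].
  - assert (Hcons : forall Cs',
        list_sum (map (fun C => count (fun t => P t && cl C t) (t :: L)) Cs') =
        ((if P t then count (fun C => cl C t) Cs' else 0) +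
         list_sum (map (fun C => count (fun t => P t && cl C t) L) Cs'))%nat).
    { induction Cs' as [|C Cs' IHC]; [now destruct (P t)|].
      simpl. rewrite !count_cons, IHC. destruct (P t), (cl C t); simpl; lia. }
    rewrite Hcons, count_cons, IH. destruct (P t) eqn:Ht; [now rewrite HP | reflexivity].
Qed.

Lemma NoDup_list_prod {A B} (L1 : list A) (L2 : list B) :
  NoDup L1 -> NoDup L2 -> NoDup (list_prod L1 L2).
Proof.
  intros N1 N2. induction N1 as [|a L1 Ha N1 IH]; simpl; [constructor|].
  apply NoDup_app; auto.
  - apply NoDup_map_NoDup_ForallPairs; auto. intros x y _ _ E. now injection E.
  - intros [x y] H1 H2. apply in_map_iff in H1 as [y' [E _]]. injection E as -> _.
    apply in_prod_iff in H2. tauto.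
Qed.

Lemma in_zrange x m : In x (zrange m) <-> (- Z.of_nat m <= x <= Z.of_nat m)%Z.
Proof.
  unfold zrange. rewrite in_map_iff. split.
  - intros [k [<- Hk]]. apply in_seq in Hk. lia.
  - intros H. exists (Z.to_nat (x + Z.of_nat m)). split; [lia | apply in_seq; lia].
Qed.

Lemma NoDup_zrange m : NoDup (zrange m).
Proof. apply NoDup_map_NoDup_ForallPairs; [intros x y _ _ E; lia | apply seq_NoDup]. Qed.

Definition cube (R : nat) : list (Z * Z * Z) :=
  list_prod (list_prod (zrange R) (zrange R)) (zrange R).

Lemma in_cube x y z R : In (x, y, z) (cube R) <->
  (Z.abs x <= Z.of_nat R /\ Z.abs y <= Z.of_nat R /\ Z.abs z <= Z.of_nat R)%Z.
Proof. unfold cube. rewrite !in_prod_iff, !in_zrange. lia. Qed.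

Lemma NoDup_cube R : NoDup (cube R).
Proof. unfold cube. repeat apply NoDup_list_prod; apply NoDup_zrange. Qed.

Lemma count_square_eq (r : Z) R : (Z.abs r <= Z.of_nat R)%Z ->
  count (fun u => (u * u =? r * r)%Z) (zrange R) = if (r =? 0)%Z then 1%nat else 2%nat.
Proof.
  intros Hr. assert (Hsq : forall u, (u * u = r * r)%Z <-> u = r \/ u = (- r)%Z).
  { intros u. split; [|intros [-> | ->]; ring].
    intros E. assert (Hf : ((u - r) * (u + r) = 0)%Z) by lia. apply Z.mul_eq_0 in Hf. lia. }
  destruct (Z.eqb_spec r 0) as [-> | Hr0].
  - rewrite (count_same _ _ [0%Z]);
      [reflexivity | apply NoDup_zrange | repeat constructor; easy | |];
      intros u Hu; apply Z.eqb_eq, Hsq in Hu; [apply in_zrange; lia | simpl; lia].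
  - rewrite (count_same _ _ [r; (- r)%Z]).
    + rewrite !count_cons. rewrite Z.mul_opp_opp, Z.eqb_refl. reflexivity.
    + apply NoDup_zrange.
    + repeat constructor; simpl; lia.
    + intros u Hu. apply Z.eqb_eq, Hsq in Hu. apply in_zrange. lia.
    + intros u Hu. apply Z.eqb_eq, Hsq in Hu. simpl. lia.
Qed.

(** * Theta series as counting functions *)

(* A coordinate of kind [Any] runs over [Z] with exponent [u^2] (the series [phi]); one of
   kind [Odd] runs over the odd integers with exponent [(u^2 - 1)/8], the triangular
   numbers, each reached by [u] and [-u] (the series [2 psi]). *)
Inductive kind := Any | Odd.

Definition kind_dom (k : kind) (u : Z) : bool := match k with Any => true | Odd => Z.odd u end.

Definition kind_exp (k : kind) (u : Z) : Z :=
  match k with Any => u * u | Odd => (u * u - 1) / 8 end.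

Definition kind_sq (k : kind) (X : Z) : Z := match k with Any => X | Odd => 8 * X + 1 end.

(* The exponents of kind [k] are the [kind_val k n]; each is reached exactly by
   [u = +/- kind_root k n], that is by [kind_weight k n] values of [u]. *)
Definition kind_val (k : kind) (n : nat) : nat :=
  match k with Any => n * n | Odd => n * (n + 1) / 2 end%nat.

Definition kind_root (k : kind) (n : nat) : Z :=
  match k with Any => Z.of_nat n | Odd => 2 * Z.of_nat n + 1 end.

Definition kind_weight (k : kind) (n : nat) : nat :=
  match k with Any => if (n =? 0)%nat then 1 else 2 | Odd => 2 end%nat.

Lemma double_triangle n : (2 * (n * (n + 1) / 2) = n * (n + 1))%nat.
Proof.
  destruct (Nat.Even_or_Odd n) as [[t ->] | [t ->]].
  - replace (2 * t * (2 * t + 1))%nat with (t * (2 * t + 1) * 2)%nat by ring.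
    rewrite Nat.div_mul by lia. ring.
  - replace ((2 * t + 1) * (2 * t + 1 + 1))%nat with ((2 * t + 1) * (t + 1) * 2)%nat by ring.
    rewrite Nat.div_mul by lia. ring.
Qed.

Lemma odd_sq_mod8 u : Z.odd u = true -> (u * u = 8 * ((u * u - 1) / 8) + 1)%Z.
Proof.
  intros Hu. apply Z.odd_spec in Hu as [m ->].
  destruct (Z.Even_or_Odd m) as [[t ->] | [t ->]].
  - replace ((2 * (2 * t) + 1) * (2 * (2 * t) + 1) - 1)%Z with ((2 * t * t + t) * 8)%Z by ring.
    rewrite Z.div_mul by lia. ring.
  - replace ((2 * (2 * t + 1) + 1) * (2 * (2 * t + 1) + 1) - 1)%Z
      with ((2 * t * t + 3 * t + 1) * 8)%Z by ring.
    rewrite Z.div_mul by lia. ring.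
Qed.

Lemma kind_sq_exp k u : kind_dom k u = true -> (u * u = kind_sq k (kind_exp k u))%Z.
Proof. destruct k; cbn; [reflexivity | apply odd_sq_mod8]. Qed.

Lemma kind_sq_val k n : kind_sq k (Z.of_nat (kind_val k n)) = (kind_root k n * kind_root k n)%Z.
Proof.
  destruct k; unfold kind_sq, kind_val, kind_root; [lia|]. pose proof (double_triangle n).
  set (T := (n * (n + 1) / 2)%nat) in *. nia.
Qed.

Lemma kind_dom_of_sq k u n : (u * u = kind_root k n * kind_root k n)%Z -> kind_dom k u = true.
Proof.
  destruct k; unfold kind_dom, kind_root; [reflexivity|]. intros E.
  destruct (Z.Even_or_Odd u) as [[m ->] | [m ->]]; [exfalso | apply Z.odd_spec; now exists m].
  assert (2 * (2 * m * m - 2 * Z.of_nat n * Z.of_nat n - 2 * Z.of_nat n) = 1)%Z by lia. lia.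
Qed.

Lemma kind_exp_is_val k u : kind_dom k u = true -> exists n, kind_exp k u = Z.of_nat (kind_val k n).
Proof.
  intros Hu. assert (Hsq := kind_sq_exp k u Hu).
  assert (Hr : exists n, (u * u = kind_root k n * kind_root k n)%Z).
  { destruct k; unfold kind_root.
    - exists (Z.to_nat (Z.abs u)). rewrite Z2Nat.id by lia. destruct (Z.abs_spec u); nia.
    - apply Z.odd_spec in Hu as [m ->]. destruct (Z_le_gt_dec 0 m).
      + exists (Z.to_nat m). rewrite Z2Nat.id by lia. reflexivity.
      + exists (Z.to_nat (- m - 1)). rewrite Z2Nat.id by lia. ring. }
  destruct Hr as [n Hn]. exists n. rewrite <- kind_sq_val, Hsq in Hn.
  destruct k; unfold kind_sq in Hn; lia.
Qed.

Lemma kind_val_incr k n : (kind_val k n < kind_val k (S n))%nat.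
Proof.
  destruct k; unfold kind_val; [nia|].
  pose proof (double_triangle n) as Hn. pose proof (double_triangle (S n)) as HSn.
  set (T := (n * (n + 1) / 2)%nat) in *. set (T' := (S n * (S n + 1) / 2)%nat) in *. nia.
Qed.

Record coord := Coord { ckind : kind; cscale : nat; cshift : nat }.

Definition cval (c : coord) (X : Z) : Z := (Z.of_nat (cshift c) + Z.of_nat (cscale c) * X)%Z.

Definition cexp (c : coord) (u : Z) : Z := cval c (kind_exp (ckind c) u).

(* Every [u] with [cexp c u = m] lies in [zrange (8 * m + 1)], see [cexp_bound]. *)
Definition theta_coef (c : coord) (m : nat) : nat :=
  count (fun u => kind_dom (ckind c) u && (cexp c u =? Z.of_nat m)%Z) (zrange (8 * m + 1)).

Definition theta (c : coord) (q : C) : C :=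
  Cmult (Cpow q (cshift c))
        (match ckind c with
         | Any => rphi (Cpow q (cscale c))
         | Odd => Cmult (RtoC 2) (rpsi (Cpow q (cscale c)))
         end).

Lemma cexp_bound c u : (1 <= cscale c)%nat -> kind_dom (ckind c) u = true ->
  (0 <= cexp c u /\ Z.abs u <= 8 * cexp c u + 1)%Z.
Proof.
  intros Hs Hu. assert (Hsq := kind_sq_exp _ _ Hu). unfold cexp, cval.
  set (X := kind_exp (ckind c) u) in *.
  assert (Habs : (Z.abs u <= u * u)%Z) by (destruct (Z.abs_spec u); nia).
  assert (HX : (0 <= X /\ u * u <= 8 * X + 1)%Z)
    by (destruct (ckind c); unfold kind_sq in Hsq; lia).
  assert (HsX : (X <= Z.of_nat (cscale c) * X)%Z) by nia.
  lia.
Qed.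

Lemma theta_coef_stable c m R : (1 <= cscale c)%nat -> (8 * m + 1 <= R)%nat ->
  theta_coef c m = count (fun u => kind_dom (ckind c) u && (cexp c u =? Z.of_nat m)%Z) (zrange R).
Proof.
  intros Hs HR. apply count_same; try apply NoDup_zrange;
    intros u Hu; apply andb_prop in Hu as [Hd He]; apply Z.eqb_eq in He;
    destruct (cexp_bound c u Hs Hd); apply in_zrange; lia.
Qed.

Lemma cval_inj c X Y : (1 <= cscale c)%nat -> cval c X = cval c Y -> X = Y.
Proof. unfold cval. intros Hs E. nia. Qed.

Lemma theta_coef_on c n : (1 <= cscale c)%nat ->
  theta_coef c (cshift c + cscale c * kind_val (ckind c) n) = kind_weight (ckind c) n.
Proof.
  intros Hs. unfold theta_coef. set (m := (cshift c + cscale c * kind_val (ckind c) n)%nat).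
  assert (Hm : Z.of_nat m = cval c (Z.of_nat (kind_val (ckind c) n))) by (unfold m, cval; lia).
  rewrite (count_ext_in _ (fun u => (u * u =? kind_root (ckind c) n * kind_root (ckind c) n)%Z)).
  - rewrite count_square_eq.
    + destruct (ckind c); unfold kind_root, kind_weight;
        [destruct (Nat.eqb_spec n 0), (Z.eqb_spec (Z.of_nat n) 0) |
         destruct (Z.eqb_spec (2 * Z.of_nat n + 1) 0)]; lia.
    + set (r := kind_root (ckind c) n). pose proof (kind_sq_val (ckind c) n) as Hr.
      assert (Habs : (Z.abs r <= r * r)%Z) by (destruct (Z.abs_spec r); nia).
      assert (Hk : (forall X, 0 <= X -> kind_sq (ckind c) X <= 8 * X + 1)%Z)
        by (destruct (ckind c); unfold kind_sq; lia).
      specialize (Hk (Z.of_nat (kind_val (ckind c) n)) ltac:(lia)).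
      assert (kind_val (ckind c) n <= m)%nat by (unfold m; nia).
      lia.
  - intros u _. apply eq_iff_eq_true. rewrite andb_true_iff, !Z.eqb_eq, Hm, <- kind_sq_val.
    unfold cexp. split.
    + intros [Hd He]. rewrite (kind_sq_exp _ _ Hd). f_equal. now apply (cval_inj c).
    + intros E. assert (Hd := kind_dom_of_sq _ _ _ (eq_trans E (kind_sq_val _ n))).
      split; [exact Hd|]. rewrite (kind_sq_exp _ _ Hd) in E. f_equal.
      destruct (ckind c); unfold kind_sq in E; lia.
Qed.

Lemma theta_coef_off c m : (1 <= cscale c)%nat ->
  (forall n, (cshift c + cscale c * kind_val (ckind c) n)%nat <> m) -> theta_coef c m = 0%nat.
Proof.
  intros Hs Hm. apply count_zero. intros u _.
  destruct (kind_dom (ckind c) u) eqn:Hd; [apply Z.eqb_neq | reflexivity].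
  destruct (kind_exp_is_val _ _ Hd) as [n Hn]. unfold cexp, cval. rewrite Hn.
  specialize (Hm n). lia.
Qed.

Lemma is_series_rphi z : Cmod z < 1 ->
  is_series (fun n => if (n =? 0)%nat then RtoC 1 else Cmult (RtoC 2) (Cpow z (n * n))) (rphi z).
Proof.
  intros Hz. apply (is_series_CSeries _ (Cmod z)); [split; [apply Cmod_ge_0 | exact Hz]|].
  intros n. destruct (Nat.eqb_spec n 0) as [-> | Hn].
  - rewrite Cmod_1. simpl. lra.
  - rewrite Cmod_mult, Cmod_R, Cmod_pow, Rabs_pos_eq by lra.
    apply Rmult_le_compat_l; [lra|].
    apply pow_le_antimono; [split; [apply Cmod_ge_0 | lra] | nia].
Qed.

Lemma is_series_rpsi z : Cmod z < 1 -> is_series (fun n => Cpow z (n * (n + 1) / 2)) (rpsi z).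
Proof.
  intros Hz. apply (is_series_CSeries _ (Cmod z)); [split; [apply Cmod_ge_0 | exact Hz]|].
  intros n. rewrite Cmod_pow. assert (0 <= Cmod z ^ n) by (apply pow_le, Cmod_ge_0).
  apply Rle_trans with (Cmod z ^ n); [|lra].
  apply pow_le_antimono; [split; [apply Cmod_ge_0 | lra]|].
  pose proof (double_triangle n). nia.
Qed.

Lemma theta_series c q : (1 <= cscale c)%nat -> Cmod q < 1 ->
  is_series (fun n => Cmult (RtoC (INR (kind_weight (ckind c) n)))
                            (Cpow q (cshift c + cscale c * kind_val (ckind c) n)))
            (theta c q).
Proof.
  intros Hs Hq. set (K := cscale c). set (s := cshift c).
  assert (Hz : Cmod (Cpow q K) < 1).
  { rewrite Cmod_pow. apply pow_lt_1_compat; [split; [apply Cmod_ge_0 | exact Hq] | lia]. }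
  unfold theta. fold K s. destruct (ckind c); unfold kind_weight, kind_val.
  - eapply is_series_ext; [|exact (is_series_scal_l (Cpow q s) _ _ (is_series_rphi _ Hz))].
    intros n. cbv beta. change scal with Cmult. rewrite Cpow_add_r, (Cpow_mult_r q K).
    destruct (Nat.eqb_spec n 0) as [-> | _]; cbn [INR].
    + rewrite Nat.mul_0_r. cbn [Cpow]. ring_C.
    + replace (RtoC (1 + 1)) with (RtoC 2) by (f_equal; lra). ring_C.
  - replace (Cmult (Cpow q s) (Cmult (RtoC 2) (rpsi (Cpow q K))))
      with (scal (Cmult (RtoC 2) (Cpow q s)) (rpsi (Cpow q K)))
      by (change scal with Cmult; ring_C).
    eapply is_series_ext;
      [|exact (is_series_scal_l (Cmult (RtoC 2) (Cpow q s)) _ _ (is_series_rpsi _ Hz))].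
    intros n. cbv beta. change scal with Cmult. rewrite Cpow_add_r, (Cpow_mult_r q K).
    cbn [INR]. replace (RtoC (1 + 1)) with (RtoC 2) by (f_equal; lra). ring_C.
Qed.

Lemma is_gf_theta_coef c q :
  (1 <= cscale c)%nat -> Cmod q < 1 -> is_gf (theta_coef c) q (theta c q).
Proof.
  intros Hs Hq.
  apply (is_gf_sparse (fun n => cshift c + cscale c * kind_val (ckind c) n)%nat
                      (kind_weight (ckind c)));
    [exact Hq | | | | | now apply theta_series].
  - intros n. pose proof (kind_val_incr (ckind c) n). nia.
  - intros n. destruct (ckind c); unfold kind_weight; [destruct (n =? 0)%nat|]; lia.
  - intros n. now apply theta_coef_on.
  - intros m Hm. now apply theta_coef_off.
Qed.

Lemma count_seq_eq (v : Z) N : (0 <= v < Z.of_nat N)%Z ->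
  count (fun k => (v =? Z.of_nat k)%Z) (seq 0 N) = 1%nat.
Proof.
  intros Hv. rewrite (count_same _ _ [Z.to_nat v]).
  - rewrite count_cons, Z2Nat.id, Z.eqb_refl by lia. reflexivity.
  - apply seq_NoDup.
  - repeat constructor. easy.
  - intros k Hk. apply Z.eqb_eq in Hk. apply in_seq. lia.
  - intros k Hk. apply Z.eqb_eq in Hk. simpl. lia.
Qed.

Section ConvCount.
Variables (A B : Type) (pA : A -> bool) (eA : A -> Z) (pB : B -> bool) (eB : B -> Z).
Variables (LA : list A) (LB : list B) (cA cB : nat -> nat) (n : nat).
Hypothesis cA_count :
  forall m, (m <= n)%nat -> cA m = count (fun a => pA a && (eA a =? Z.of_nat m)%Z) LA.
Hypothesis cB_count :
  forall m, (m <= n)%nat -> cB m = count (fun b => pB b && (eB b =? Z.of_nat m)%Z) LB.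
Hypothesis eA_nonneg : forall a, pA a = true -> (0 <= eA a)%Z.
Hypothesis eB_nonneg : forall b, pB b = true -> (0 <= eB b)%Z.

(* Split the pairs with [eA a + eB b = n] according to the value [k] of [eA a]. *)
Lemma conv_count :
  conv cA cB n =
  count (fun p => pA (fst p) && pB (snd p) && (eA (fst p) + eB (snd p) =? Z.of_nat n)%Z)
        (list_prod LA LB).
Proof.
  rewrite (count_partition _ (fun k p => eA (fst p) =? Z.of_nat k)%Z (seq 0 (S n))).
  - unfold conv. f_equal. apply map_ext_in. intros k Hk. apply in_seq in Hk.
    rewrite cA_count, cB_count by lia. rewrite <- count_list_prod_andb.
    apply count_ext_in. intros [a b] _. cbn [fst snd]. apply eq_iff_eq_true.
    rewrite !andb_true_iff, !Z.eqb_eq. intuition lia.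
  - intros [a b] H. cbn [fst snd] in *. rewrite !andb_true_iff, Z.eqb_eq in H.
    destruct H as [[Ha Hb] E]. specialize (eA_nonneg a Ha). specialize (eB_nonneg b Hb).
    apply count_seq_eq. lia.
Qed.

End ConvCount.

Definition triple_count (c1 c2 c3 : coord) (n : nat) : nat :=
  count (fun t => let '(u, v, w) := t in
           kind_dom (ckind c1) u && kind_dom (ckind c2) v && kind_dom (ckind c3) w &&
           (cexp c1 u + cexp c2 v + cexp c3 w =? Z.of_nat n)%Z)
        (cube (8 * n + 1)).

Lemma conv_theta_coef3 (c1 c2 c3 : coord) n :
  (1 <= cscale c1)%nat -> (1 <= cscale c2)%nat -> (1 <= cscale c3)%nat ->
  conv (conv (theta_coef c1) (theta_coef c2)) (theta_coef c3) n = triple_count c1 c2 c3 n.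
Proof.
  intros H1 H2 H3. set (R := (8 * n + 1)%nat).
  assert (Hnn : forall c u, (1 <= cscale c)%nat -> kind_dom (ckind c) u = true -> (0 <= cexp c u)%Z)
    by (intros c u Hc Hu; now apply cexp_bound).
  erewrite (conv_count _ _ (fun p => kind_dom (ckind c1) (fst p) && kind_dom (ckind c2) (snd p))
              (fun p => cexp c1 (fst p) + cexp c2 (snd p))%Z (kind_dom (ckind c3)) (cexp c3)
              (list_prod (zrange R) (zrange R)) (zrange R)).
  - unfold triple_count. apply count_ext_in. now intros [[u v] w] _.
  - intros m Hm. apply conv_count; try (intros; apply theta_coef_stable; auto; lia);
      intros u Hu; now apply Hnn.
  - intros m Hm. apply theta_coef_stable; auto. lia.
  - intros [u v] Huv. apply andb_true_iff in Huv as [Hu Hv]. cbn [fst snd].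
    pose proof (Hnn c1 u H1 Hu). pose proof (Hnn c2 v H2 Hv). lia.
  - intros w Hw. now apply Hnn.
Qed.

Lemma is_gf_triple_count (c1 c2 c3 : coord) q :
  (1 <= cscale c1)%nat -> (1 <= cscale c2)%nat -> (1 <= cscale c3)%nat -> Cmod q < 1 ->
  is_gf (triple_count c1 c2 c3) q (Cmult (Cmult (theta c1 q) (theta c2 q)) (theta c3 q)).
Proof.
  intros H1 H2 H3 Hq.
  apply (is_gf_ext (conv (conv (theta_coef c1) (theta_coef c2)) (theta_coef c3))).
  - intros n. now apply conv_theta_coef3.
  - apply is_gf_conv; [apply is_gf_conv|]; now apply is_gf_theta_coef.
Qed.

(** * Solutions of [a x^2 + 3a y^2 + 4b z^2 = M] by residue classes *)

Local Open Scope Z_scope.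

Definition form (A1 A2 A3 : nat) (t : Z * Z * Z) : Z :=
  let '(x, y, z) := t in Z.of_nat A1 * x * x + Z.of_nat A2 * y * y + Z.of_nat A3 * z * z.

Definition solves (A1 A2 A3 M : nat) (t : Z * Z * Z) : bool := Z.of_nat M =? form A1 A2 A3 t.

Lemma Nrep_count A1 A2 A3 M : Nrep A1 A2 A3 M = count (solves A1 A2 A3 M) (cube M).
Proof. unfold Nrep, count, cube. f_equal. apply filter_ext. now intros [[x y] z]. Qed.

Lemma solves_in_cube A1 A2 A3 M t : (1 <= A1)%nat -> (1 <= A2)%nat -> (1 <= A3)%nat ->
  solves A1 A2 A3 M t = true -> In t (cube M).
Proof.
  destruct t as [[x y] z]. unfold solves, form. rewrite Z.eqb_eq. intros H1 H2 H3 H.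
  apply in_cube. nia.
Qed.

(* [Class d k] is the set of the [d u] with [u] of kind [k]; for instance [Class 2 Odd]
   is the residue class of 2 mod 4. *)
Inductive class := Class (d : Z) (k : kind).

Definition in_class (C : class) (x : Z) : bool :=
  let '(Class d k) := C in (x mod d =? 0) && kind_dom k (x / d).

Definition piece : Type := class * class * class.

Definition in_piece (p : piece) (t : Z * Z * Z) : bool :=
  let '(C1, C2, C3) := p in let '(x, y, z) := t in in_class C1 x && in_class C2 y && in_class C3 z.

Definition piece_count (A1 A2 A3 M : nat) (p : piece) : nat :=
  count (fun t => solves A1 A2 A3 M t && in_piece p t) (cube M).

Lemma in_class_mul d k u : 0 < d -> in_class (Class d k) (d * u) = kind_dom k u.
Proof.
  intros Hd. unfold in_class. rewrite Z.mul_comm, Z.mod_mul, Z.div_mul by lia. reflexivity.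
Qed.

Lemma in_class_div d k x : 0 < d -> in_class (Class d k) x = true ->
  x = d * (x / d) /\ kind_dom k (x / d) = true.
Proof.
  intros Hd. unfold in_class. rewrite andb_true_iff, Z.eqb_eq. intros [Hm Hk].
  split; [|exact Hk]. rewrite (Z.div_mod x d) at 1 by lia. lia.
Qed.

Section Pieces.
Variables (A1 A2 A3 : nat) (d1 d2 d3 : Z) (k1 k2 k3 : kind) (K1 K2 K3 s1 s2 s3 M n r : nat).
Local Notation c1 := (Coord k1 K1 s1).
Local Notation c2 := (Coord k2 K2 s2).
Local Notation c3 := (Coord k3 K3 s3).
Hypothesis HM : M = (8 * n + r)%nat.
Hypotheses (HA1 : (1 <= A1)%nat) (HA2 : (1 <= A2)%nat) (HA3 : (1 <= A3)%nat).
Hypotheses (Hd1 : 0 < d1) (Hd2 : 0 < d2) (Hd3 : 0 < d3).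
Hypotheses (HK1 : (1 <= K1)%nat) (HK2 : (1 <= K2)%nat) (HK3 : (1 <= K3)%nat).
Hypothesis form_identity : forall X Y W,
  Z.of_nat A1 * (d1 * d1) * kind_sq k1 X + Z.of_nat A2 * (d2 * d2) * kind_sq k2 Y
  + Z.of_nat A3 * (d3 * d3) * kind_sq k3 W
  = 8 * (cval c1 X + cval c2 Y + cval c3 W) + Z.of_nat r.

Lemma form_scaled u v w :
  kind_dom k1 u = true -> kind_dom k2 v = true -> kind_dom k3 w = true ->
  form A1 A2 A3 (d1 * u, d2 * v, d3 * w) = 8 * (cexp c1 u + cexp c2 v + cexp c3 w) + Z.of_nat r.
Proof.
  intros Hu Hv Hw. unfold cexp. rewrite <- form_identity, <- !kind_sq_exp by assumption.
  unfold form. ring.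
Qed.

(* Bijection [(x, y, z) <-> (x / d1, y / d2, z / d3)]. *)
Lemma piece_count_triple :
  piece_count A1 A2 A3 M (Class d1 k1, Class d2 k2, Class d3 k3) = triple_count c1 c2 c3 n.
Proof.
  unfold piece_count, triple_count. cbn [ckind].
  apply (count_bij _ _ _ _ (fun t => let '(x, y, z) := t in (x / d1, y / d2, z / d3))
                           (fun s => let '(u, v, w) := s in (d1 * u, d2 * v, d3 * w))).
  - apply NoDup_cube.
  - apply NoDup_cube.
  - intros t Ht. apply andb_true_iff in Ht as [Ht _]. now apply (solves_in_cube A1 A2 A3).
  - intros [[u v] w] H. rewrite !andb_true_iff, Z.eqb_eq in H. destruct H as [[[Hu Hv] Hw] E].
    destruct (cexp_bound c1 u), (cexp_bound c2 v), (cexp_bound c3 w); auto.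
    apply in_cube. lia.
  - intros [[x y] z] H. unfold solves, in_piece in H. rewrite !andb_true_iff, Z.eqb_eq in H.
    destruct H as [E [[Cx Cy] Cz]].
    destruct (in_class_div _ _ _ Hd1 Cx) as [Ex Hu], (in_class_div _ _ _ Hd2 Cy) as [Ey Hv],
      (in_class_div _ _ _ Hd3 Cz) as [Ez Hw].
    rewrite <- Ex, <- Ey, <- Ez. split; [|reflexivity].
    rewrite Hu, Hv, Hw. apply Z.eqb_eq.
    rewrite Ex, Ey, Ez, form_scaled in E by assumption. lia.
  - intros [[u v] w] H. rewrite !andb_true_iff, Z.eqb_eq in H. destruct H as [[[Hu Hv] Hw] E].
    split.
    + unfold solves, in_piece. rewrite !in_class_mul, Hu, Hv, Hw, form_scaled by assumption.
      apply andb_true_iff. split; [apply Z.eqb_eq; lia | reflexivity].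
    + rewrite !(Z.mul_comm d1), !(Z.mul_comm d2), !(Z.mul_comm d3), !Z.div_mul by lia.
      reflexivity.
Qed.

End Pieces.

Lemma in_class_odd x : in_class (Class 1 Odd) x = (x mod 2 =? 1).
Proof. unfold in_class, kind_dom. now rewrite Z.mod_1_r, Z.div_1_r, Zodd_mod. Qed.

Lemma in_class_twice_odd x : in_class (Class 2 Odd) x = (x mod 4 =? 2).
Proof.
  unfold in_class, kind_dom. rewrite Zodd_mod. apply eq_iff_eq_true.
  rewrite andb_true_iff, !Z.eqb_eq. Z.to_euclidean_division_equations. lia.
Qed.

Lemma in_class_four x : in_class (Class 4 Any) x = (x mod 4 =? 0).
Proof. unfold in_class, kind_dom. now rewrite andb_true_r. Qed.

Ltac bool_to_Prop :=
  repeat match goal with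
  | H : (_ && _) = true |- _ => apply andb_true_iff in H as [? ?]
  | H : (_ =? _) = true |- _ => apply Z.eqb_eq in H
  | H : negb _ = true |- _ => apply negb_true_iff in H
  | H : (_ =? _) = false |- _ => apply Z.eqb_neq in H
  end;
  rewrite ?andb_true_iff, ?negb_true_iff, ?Z.eqb_eq, ?Z.eqb_neq.

Lemma form_flip A1 A2 A3 x y z : form A1 A2 A3 (x, - y, z) = form A1 A2 A3 (x, y, z).
Proof. unfold form. ring. Qed.

Lemma form_sigma A C x y z X Y : 2 * X = x + 3 * y -> 2 * Y = x - y ->
  form A (3 * A) C (X, Y, z) = form A (3 * A) C (x, y, z).
Proof. unfold form. intros HX HY. rewrite Nat2Z.inj_mul. nia. Qed.

(* [sigma] is an involution preserving [x^2 + 3y^2]; it exchanges the odd pairs with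
   [x = y mod 4] and the even pairs with [x^2 + 3y^2 = 4 mod 8], while [flip] exchanges the
   odd pairs with [x = y] and with [x = -y mod 4]. *)
Section OddOdd.
Variables (a c M : nat) (C3 : class).
Hypotheses (Ha : (1 <= a)%nat) (Hc : (1 <= c)%nat).

Let sol (p : piece) (t : Z * Z * Z) : bool := solves a (3 * a) c M t && in_piece p t.
Let OO : piece := (Class 1 Odd, Class 1 Odd, C3).
Let P24 : piece := (Class 2 Odd, Class 4 Any, C3).
Let P42 : piece := (Class 4 Any, Class 2 Odd, C3).

Let cong (t : Z * Z * Z) : bool := let '(x, y, _) := t in (x - y) mod 4 =? 0.
Let flip (t : Z * Z * Z) : Z * Z * Z := let '(x, y, z) := t in (x, - y, z).
Let sigma (t : Z * Z * Z) : Z * Z * Z := let '(x, y, z) := t in ((x + 3 * y) / 2, (x - y) / 2, z).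

Lemma sigma_odd x y : x mod 2 = 1 -> y mod 2 = 1 -> (x - y) mod 4 = 0 ->
  2 * ((x + 3 * y) / 2) = x + 3 * y /\ 2 * ((x - y) / 2) = x - y /\
  ((((x + 3 * y) / 2) mod 4 = 2 /\ ((x - y) / 2) mod 4 = 0) \/
   (((x + 3 * y) / 2) mod 4 = 0 /\ ((x - y) / 2) mod 4 = 2)).
Proof. intros. Z.to_euclidean_division_equations. lia. Qed.

Lemma sigma_even X Y : (X mod 4 = 2 /\ Y mod 4 = 0) \/ (X mod 4 = 0 /\ Y mod 4 = 2) ->
  2 * ((X + 3 * Y) / 2) = X + 3 * Y /\ 2 * ((X - Y) / 2) = X - Y /\
  ((X + 3 * Y) / 2) mod 2 = 1 /\ ((X - Y) / 2) mod 2 = 1 /\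
  ((X + 3 * Y) / 2 - (X - Y) / 2) mod 4 = 0.
Proof. intros. Z.to_euclidean_division_equations. lia. Qed.

Lemma sigma_involutive x y : 2 * ((x + 3 * y) / 2) = x + 3 * y -> 2 * ((x - y) / 2) = x - y ->
  ((x + 3 * y) / 2 + 3 * ((x - y) / 2)) / 2 = x /\ ((x + 3 * y) / 2 - (x - y) / 2) / 2 = y.
Proof. intros. Z.to_euclidean_division_equations. lia. Qed.

Lemma piece_count_odd_odd :
  piece_count a (3 * a) c M (Class 1 Odd, Class 1 Odd, C3) =
  (2 * (piece_count a (3 * a) c M (Class 2 Odd, Class 4 Any, C3) +
        piece_count a (3 * a) c M (Class 4 Any, Class 2 Odd, C3)))%nat.
Proof.
  change (count (sol OO) (cube M) =
          (2 * (count (sol P24) (cube M) + count (sol P42) (cube M)))%nat).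
  assert (Hin : forall p t, sol p t = true -> In t (cube M)).
  { intros p t H. apply andb_true_iff in H as [H _].
    apply (solves_in_cube a (3 * a) c); auto; lia. }
  assert (Hflip : count (fun t => sol OO t && negb (cong t)) (cube M) =
                  count (fun t => sol OO t && cong t) (cube M)).
  { apply (count_bij _ _ _ _ flip flip); try apply NoDup_cube;
      try (intros t Ht; apply andb_true_iff in Ht as [Ht _]; now apply (Hin OO));
      intros [[x y] z] H; unfold sol, OO, cong, flip, solves, in_piece in *; cbv beta iota in *;
      rewrite ?form_flip, ?Z.opp_involutive, !in_class_odd in *; bool_to_Prop;
      (split; [|reflexivity]); repeat split; auto; Z.to_euclidean_division_equations; lia. }
  assert (Hsigma : count (fun t => sol OO t && cong t) (cube M) =
                   count (fun t => sol P24 t || sol P42 t) (cube M)).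
  { apply (count_bij _ _ _ _ sigma sigma); try apply NoDup_cube.
    - intros t Ht. apply andb_true_iff in Ht as [Ht _]. now apply (Hin OO).
    - intros t Ht. apply orb_true_iff in Ht as [Ht | Ht];
        [apply (Hin P24) | apply (Hin P42)]; exact Ht.
    - intros [[x y] z] H. unfold sol, OO, P24, P42, cong, sigma, solves, in_piece in *.
      cbv beta iota in *. rewrite !in_class_odd in H. bool_to_Prop.
      destruct (sigma_odd x y) as [HX [HY Hcl]]; auto.
      destruct (sigma_involutive x y HX HY) as [-> ->].
      rewrite (form_sigma a c x y z _ _ HX HY), !in_class_twice_odd, !in_class_four, orb_true_iff.
      bool_to_Prop. split; [|reflexivity]. destruct Hcl; [left | right]; tauto.
    - intros [[X Y] z] H. unfold sol, OO, P24, P42, cong, sigma, solves, in_piece in *.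
      cbv beta iota in *. rewrite !in_class_twice_odd, !in_class_four, orb_true_iff in H.
      assert (HXY : (X mod 4 = 2 /\ Y mod 4 = 0) \/ (X mod 4 = 0 /\ Y mod 4 = 2)) by
        (destruct H as [H | H]; bool_to_Prop; tauto).
      assert (HC : Z.of_nat M = form a (3 * a) c (X, Y, z) /\ in_class C3 z = true) by
        (destruct H as [H | H]; bool_to_Prop; tauto).
      destruct (sigma_even X Y HXY) as [Hx [Hy [Ox [Oy Hcong]]]].
      destruct (sigma_involutive X Y) as [HsX HsY]; [lia | lia |].
      rewrite HsX, HsY, !in_class_odd, <- (form_sigma a c _ _ z X Y) by lia.
      bool_to_Prop. split; [|reflexivity]. tauto. }
  rewrite (count_split _ cong), Hflip, Hsigma, (count_split _ (sol P24)).
  rewrite (count_ext_in (fun t => (sol P24 t || sol P42 t) && sol P24 t) (sol P24)),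
          (count_ext_in (fun t => (sol P24 t || sol P42 t) && negb (sol P24 t)) (sol P42)).
  - lia.
  - intros [[x y] z] _. destruct (sol P24 (x, y, z)) eqn:E24; [|now destruct (sol P42 (x, y, z))].
    destruct (sol P42 (x, y, z)) eqn:E42; [exfalso | reflexivity].
    unfold sol, P24, P42, in_piece in *. cbv beta iota in *.
    rewrite !in_class_twice_odd, !in_class_four in *. bool_to_Prop. lia.
  - intros t _. now destruct (sol P24 t), (sol P42 t).
Qed.
End OddOdd.

Definition class_mod4 (C : class) : bool :=
  let '(Class d k) := C in
  (d =? 1) || (d =? 2) || ((d =? 4) && match k with Any => true | Odd => false end).

Lemma in_class_mod4 C x : class_mod4 C = true -> in_class C x = in_class C (x mod 4).
Proof.
  destruct C as [d k]. unfold class_mod4, in_class, kind_dom. intros H.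
  assert (Hd : d = 1 \/ d = 2 \/ (d = 4 /\ k = Any)).
  { destruct k; rewrite ?andb_true_r, ?andb_false_r, !orb_true_iff, ?Z.eqb_eq in H;
      [tauto | intuition discriminate]. }
  destruct Hd as [-> | [-> | [-> ->]]]; try destruct k; rewrite ?Zodd_mod; apply eq_iff_eq_true;
    rewrite ?andb_true_iff, ?andb_true_r, !Z.eqb_eq; Z.to_euclidean_division_equations; lia.
Qed.

Definition piece_mod4 (p : piece) : bool :=
  let '(C1, C2, C3) := p in class_mod4 C1 && class_mod4 C2 && class_mod4 C3.

Lemma form_mod8 (A B : nat) x y z : exists S,
  form A (3 * A) (4 * B) (x, y, z) =
  8 * S + Z.of_nat A * ((x mod 4) * (x mod 4) + 3 * ((y mod 4) * (y mod 4)))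
  + 4 * Z.of_nat B * ((z mod 4) * (z mod 4)).
Proof.
  pose proof (Z.div_mod x 4 ltac:(lia)) as Hx. pose proof (Z.div_mod y 4 ltac:(lia)) as Hy.
  pose proof (Z.div_mod z 4 ltac:(lia)) as Hz.
  set (i := x mod 4) in *. set (j := y mod 4) in *. set (l := z mod 4) in *.
  set (x1 := x / 4) in *. set (y1 := y / 4) in *. set (z1 := z / 4) in *.
  exists (Z.of_nat A * (2 * x1 * x1 + i * x1) + 3 * Z.of_nat A * (2 * y1 * y1 + j * y1)
          + Z.of_nat B * (8 * z1 * z1 + 4 * l * z1)).
  unfold form. rewrite Hx, Hy, Hz, !Nat2Z.inj_mul. ring.
Qed.

(* Membership in a piece only depends on [x, y, z mod 4], and so does [M mod 8]. *)
Lemma Nrep_pieces (a b M : nat) (Ps : list piece) :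
  (1 <= a)%nat -> (1 <= b)%nat -> forallb piece_mod4 Ps = true ->
  (forall i j l S, 0 <= i < 4 -> 0 <= j < 4 -> 0 <= l < 4 ->
     Z.of_nat M = 8 * S + Z.of_nat a * (i * i + 3 * (j * j)) + 4 * Z.of_nat b * (l * l) ->
     count (fun p => in_piece p (i, j, l)) Ps = 1%nat) ->
  Nrep a (3 * a) (4 * b) M = list_sum (map (piece_count a (3 * a) (4 * b) M) Ps).
Proof.
  intros Ha Hb HPs Hres. rewrite Nrep_count. apply count_partition.
  intros [[x y] z] H. rewrite (count_ext_in _ (fun p => in_piece p (x mod 4, y mod 4, z mod 4))).
  - destruct (form_mod8 a b x y z) as [S HS]. unfold solves in H. bool_to_Prop.
    apply (Hres _ _ _ S); try (apply Z.mod_pos_bound; lia). lia.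
  - intros [[C1 C2] C3] Hp. rewrite forallb_forall in HPs. specialize (HPs _ Hp).
    unfold piece_mod4 in HPs. bool_to_Prop. unfold in_piece.
    now rewrite <- !in_class_mod4.
Qed.


(** * The four counting identities *)

Ltac solve_residues :=
  intros i j l S Hi Hj Hl E;
  assert (Hi' : i = 0 \/ i = 1 \/ i = 2 \/ i = 3) by lia;
  assert (Hj' : j = 0 \/ j = 1 \/ j = 2 \/ j = 3) by lia;
  assert (Hl' : l = 0 \/ l = 1 \/ l = 2 \/ l = 3) by lia;
  destruct Hi' as [-> | [-> | [-> | ->]]]; destruct Hj' as [-> | [-> | [-> | ->]]];
  destruct Hl' as [-> | [-> | [-> | ->]]]; first [reflexivity | exfalso; lia].

Ltac solve_form_identity := intros X Y W; unfold kind_sq, cval; cbn [cscale cshift]; subst; nia.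

Section EvenB.
Variables (a b a1 c : nat).
Hypotheses (Ha : a = (2 * a1 + 1)%nat) (Hb : b = (2 * c)%nat) (Hc : (1 <= c)%nat).

Lemma Nrep_8n_5a n :
  Nrep a (3 * a) (4 * b) (8 * n + 5 * a) =
  triple_count (Coord Odd a a) (Coord Odd (12 * a) 0) (Coord Any c 0) n.
Proof.
  rewrite (Nrep_pieces a b _ [(Class 1 Odd, Class 2 Odd, Class 1 Any)]);
    [| lia | lia | reflexivity | solve_residues].
  cbn [map list_sum fold_right]. rewrite Nat.add_0_r.
  apply piece_count_triple with (n := n) (r := (5 * a)%nat); try lia. solve_form_identity.
Qed.

Lemma Nrep_8n_7a n :
  Nrep a (3 * a) (4 * b) (8 * n + 7 * a) =
  triple_count (Coord Odd (4 * a) 0) (Coord Odd (3 * a) 0) (Coord Any c 0) n.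
Proof.
  rewrite (Nrep_pieces a b _ [(Class 2 Odd, Class 1 Odd, Class 1 Any)]);
    [| lia | lia | reflexivity | solve_residues].
  cbn [map list_sum fold_right]. rewrite Nat.add_0_r.
  apply piece_count_triple with (n := n) (r := (7 * a)%nat); try lia. solve_form_identity.
Qed.

End EvenB.

Section OddB.
Variables (a b a1 c : nat).
Hypotheses (Ha : a = (2 * a1 + 1)%nat) (Hb : b = (2 * c + 1)%nat).

Lemma Nrep_8n n :
  Nrep a (3 * a) (4 * b) (8 * n) =
  (triple_count (Coord Any (2 * a) 0) (Coord Any (6 * a) 0) (Coord Any (2 * b) 0) n +
   triple_count (Coord Odd (4 * a) (2 * a)) (Coord Odd (12 * a) 0) (Coord Any (2 * b) 0) n +
   3 * (triple_count (Coord Odd (4 * a) 0) (Coord Any (6 * a) 0)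
                     (Coord Odd (4 * b) (a1 + c + 1)) n +
        triple_count (Coord Any (2 * a) 0) (Coord Odd (12 * a) 0)
                     (Coord Odd (4 * b) (a + (a1 + c + 1))) n))%nat.
Proof.
  rewrite (Nrep_pieces a b _ [(Class 4 Any, Class 4 Any, Class 2 Any);
                              (Class 2 Odd, Class 2 Odd, Class 2 Any);
                              (Class 1 Odd, Class 1 Odd, Class 1 Odd);
                              (Class 2 Odd, Class 4 Any, Class 1 Odd);
                              (Class 4 Any, Class 2 Odd, Class 1 Odd)]);
    [| lia | lia | reflexivity | solve_residues].
  cbn [map list_sum fold_right]. rewrite piece_count_odd_odd by lia.
  let piece d1 d2 d3 :=
    rewrite <- (piece_count_triple a (3 * a) (4 * b) d1 d2 d3) with (M := (8 * n)%nat) (r := 0%nat)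
      by (lia || solve_form_identity) in
  piece 4 4 2; piece 2 2 2; piece 2 4 1; piece 4 2 1.
  lia.
Qed.

Lemma Nrep_8n_4 n :
  Nrep a (3 * a) (4 * b) (8 * n + 4) =
  (triple_count (Coord Any (2 * a) 0) (Coord Any (6 * a) 0) (Coord Odd (4 * b) c) n +
   triple_count (Coord Odd (4 * a) 0) (Coord Odd (12 * a) 0) (Coord Odd (4 * b) (2 * a + c)) n +
   3 * (triple_count (Coord Odd (4 * a) 0) (Coord Any (6 * a) 0) (Coord Any (2 * b) a1) n +
        triple_count (Coord Any (2 * a) 0) (Coord Odd (12 * a) 0)
                     (Coord Any (2 * b) (a + a1)) n))%nat.
Proof.
  rewrite (Nrep_pieces a b _ [(Class 4 Any, Class 4 Any, Class 1 Odd);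
                              (Class 2 Odd, Class 2 Odd, Class 1 Odd);
                              (Class 1 Odd, Class 1 Odd, Class 2 Any);
                              (Class 2 Odd, Class 4 Any, Class 2 Any);
                              (Class 4 Any, Class 2 Odd, Class 2 Any)]);
    [| lia | lia | reflexivity | solve_residues].
  cbn [map list_sum fold_right]. rewrite piece_count_odd_odd by lia.
  let piece d1 d2 d3 :=
    rewrite <- (piece_count_triple a (3 * a) (4 * b) d1 d2 d3)
      with (M := (8 * n + 4)%nat) (r := 4%nat)
      by (lia || solve_form_identity) in
  piece 4 4 1; piece 2 2 1; piece 2 4 2; piece 4 2 2.
  lia.
Qed.

End OddB.

Local Close Scope Z_scope.

Lemma is_series_of_gf (c d : nat -> nat) q A B :
  (forall n, c n = d n) -> A = B -> is_gf c q A ->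
  is_series (fun n => Cmult (RtoC (INR (d n))) (Cpow q n)) B.
Proof. intros E <- G. exact (proj1 (is_gf_ext c d q A E G)). Qed.

Lemma RtoC_mult_eq x y z : x * y = z -> Cmult (RtoC x) (RtoC y) = RtoC z.
Proof. intros <-. now rewrite RtoC_mult. Qed.

Lemma gf_Nrep_8n_5a (a b : nat) (q : C) :
  Nat.Odd a -> Nat.Even b -> (0 < b)%nat -> Cmod q < 1 ->
  is_series
    (fun n => Cmult (RtoC (INR (Nrep a (3 * a) (4 * b) (8 * n + 5 * a)))) (Cpow q n))
    (Cmult (Cmult (Cmult (RtoC 4) (Cpow q a))
                  (Cmult (rpsi (Cpow q a)) (rpsi (Cpow q (12 * a)))))
           (rphi (Cpow q (b / 2)))).
Proof.
  intros [a1 Ha1] [c Hc] Hb Hq.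
  assert (Hbc : (b / 2 = c)%nat) by (subst b; rewrite Nat.mul_comm, Nat.div_mul; lia).
  eapply is_series_of_gf;
    [intros n; symmetry; apply (Nrep_8n_5a a b a1 c); lia | |
     apply is_gf_triple_count; cbn [cscale]; first [lia | exact Hq]].
  unfold theta. cbn [ckind cscale cshift Cpow]. rewrite Hbc, <- (RtoC_mult_eq 2 2 4) by lra.
  ring_C.
Qed.

Lemma gf_Nrep_8n_7a (a b : nat) (q : C) :
  Nat.Odd a -> Nat.Even b -> (0 < b)%nat -> Cmod q < 1 ->
  is_series
    (fun n => Cmult (RtoC (INR (Nrep a (3 * a) (4 * b) (8 * n + 7 * a)))) (Cpow q n))
    (Cmult (Cmult (RtoC 4) (Cmult (rpsi (Cpow q (3 * a))) (rpsi (Cpow q (4 * a)))))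
           (rphi (Cpow q (b / 2)))).
Proof.
  intros [a1 Ha1] [c Hc] Hb Hq.
  assert (Hbc : (b / 2 = c)%nat) by (subst b; rewrite Nat.mul_comm, Nat.div_mul; lia).
  eapply is_series_of_gf;
    [intros n; symmetry; apply (Nrep_8n_7a a b a1 c); lia | |
     apply is_gf_triple_count; cbn [cscale]; first [lia | exact Hq]].
  unfold theta. cbn [ckind cscale cshift Cpow]. rewrite Hbc, <- (RtoC_mult_eq 2 2 4) by lra.
  ring_C.
Qed.

Lemma gf_Nrep_8n (a b : nat) (q : C) :
  Nat.Odd a -> Nat.Odd b -> Cmod q < 1 ->
  is_series
    (fun n => Cmult (RtoC (INR (Nrep a (3 * a) (4 * b) (8 * n)))) (Cpow q n))
    (Cplus (Cplus
       (Cmult (Cmult (rphi (Cpow q (2 * a))) (rphi (Cpow q (6 * a)))) (rphi (Cpow q (2 * b))))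
       (Cmult (Cmult (Cmult (RtoC 4) (Cpow q (2 * a)))
                     (Cmult (rpsi (Cpow q (4 * a))) (rpsi (Cpow q (12 * a)))))
              (rphi (Cpow q (2 * b)))))
       (Cmult (Cmult (Cmult (RtoC 12) (Cpow q ((a + b) / 2)))
                     (Cplus (Cmult (rphi (Cpow q (6 * a))) (rpsi (Cpow q (4 * a))))
                            (Cmult (Cpow q a)
                                   (Cmult (rphi (Cpow q (2 * a))) (rpsi (Cpow q (12 * a)))))))
              (rpsi (Cpow q (4 * b))))).
Proof.
  intros [a1 Ha1] [c Hc] Hq.
  assert (Hs : ((a + b) / 2 = a1 + c + 1)%nat).
  { subst. replace (2 * a1 + 1 + (2 * c + 1))%nat with ((a1 + c + 1) * 2)%nat by ring.
    now rewrite Nat.div_mul. }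
  eapply is_series_of_gf;
    [intros n; symmetry; apply (Nrep_8n a b a1 c); lia | |
     apply is_gf_plus; [apply is_gf_plus | apply is_gf_scal, is_gf_plus];
       apply is_gf_triple_count; cbn [cscale]; first [lia | exact Hq]].
  unfold theta. cbn [ckind cscale cshift Cpow]. rewrite Hs, (Cpow_add_r q a).
  replace (RtoC (INR 3)) with (RtoC 3) by (f_equal; simpl; lra).
  rewrite <- (RtoC_mult_eq 3 4 12), <- (RtoC_mult_eq 2 2 4) by lra.
  ring_C.
Qed.

Lemma gf_Nrep_8n_4 (a b : nat) (q : C) :
  Nat.Odd a -> Nat.Odd b -> Cmod q < 1 ->
  is_series
    (fun n => Cmult (RtoC (INR (Nrep a (3 * a) (4 * b) (8 * n + 4)))) (Cpow q n))
    (Cplus (Cplus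
       (Cmult (Cmult (Cmult (RtoC 2) (Cpow q ((b - 1) / 2)))
                     (Cmult (rphi (Cpow q (2 * a))) (rphi (Cpow q (6 * a)))))
              (rpsi (Cpow q (4 * b))))
       (Cmult (Cmult (Cmult (RtoC 8) (Cpow q (2 * a + (b - 1) / 2)))
                     (Cmult (rpsi (Cpow q (4 * a))) (rpsi (Cpow q (12 * a)))))
              (rpsi (Cpow q (4 * b)))))
       (Cmult (Cmult (Cmult (RtoC 6) (Cpow q ((a - 1) / 2)))
                     (Cplus (Cmult (rphi (Cpow q (6 * a))) (rpsi (Cpow q (4 * a))))
                            (Cmult (Cpow q a)
                                   (Cmult (rphi (Cpow q (2 * a))) (rpsi (Cpow q (12 * a)))))))
              (rphi (Cpow q (2 * b))))).
Proof.
  intros [a1 Ha1] [c Hc] Hq.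
  assert (Hb1 : ((b - 1) / 2 = c)%nat).
  { subst. replace (2 * c + 1 - 1)%nat with (c * 2)%nat by lia. now rewrite Nat.div_mul. }
  assert (Ha1' : ((a - 1) / 2 = a1)%nat).
  { subst. replace (2 * a1 + 1 - 1)%nat with (a1 * 2)%nat by lia. now rewrite Nat.div_mul. }
  eapply is_series_of_gf;
    [intros n; symmetry; apply (Nrep_8n_4 a b a1 c); lia | |
     apply is_gf_plus; [apply is_gf_plus | apply is_gf_scal, is_gf_plus];
       apply is_gf_triple_count; cbn [cscale]; first [lia | exact Hq]].
  unfold theta. cbn [ckind cscale cshift Cpow].
  rewrite Hb1, Ha1', (Cpow_add_r q (2 * a)), (Cpow_add_r q a).
  replace (RtoC (INR 3)) with (RtoC 3) by (f_equal; simpl; lra).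
  rewrite <- (RtoC_mult_eq 2 4 8), <- (RtoC_mult_eq 2 2 4), <- (RtoC_mult_eq 3 2 6) by lra.
  ring_C.
Qed.

Theorem lemma4p2 (a b : nat) (q : C) :
  (0 < a)%nat -> (0 < b)%nat -> Nat.Odd a -> Cmod q < 1 ->
  (Nat.Even b ->
     is_series
       (fun n => Cmult (RtoC (INR (Nrep a (3 * a) (4 * b) (8 * n + 5 * a)))) (Cpow q n))
       (Cmult (Cmult (Cmult (RtoC 4) (Cpow q a))
                     (Cmult (rpsi (Cpow q a)) (rpsi (Cpow q (12 * a)))))
              (rphi (Cpow q (b / 2))))
   /\
     is_series
       (fun n => Cmult (RtoC (INR (Nrep a (3 * a) (4 * b) (8 * n + 7 * a)))) (Cpow q n))
       (Cmult (Cmult (RtoC 4) (Cmult (rpsi (Cpow q (3 * a))) (rpsi (Cpow q (4 * a)))))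
              (rphi (Cpow q (b / 2)))))
  /\
  (Nat.Odd b ->
     is_series
       (fun n => Cmult (RtoC (INR (Nrep a (3 * a) (4 * b) (8 * n)))) (Cpow q n))
       (Cplus (Cplus
          (Cmult (Cmult (rphi (Cpow q (2 * a))) (rphi (Cpow q (6 * a)))) (rphi (Cpow q (2 * b))))
          (Cmult (Cmult (Cmult (RtoC 4) (Cpow q (2 * a)))
                        (Cmult (rpsi (Cpow q (4 * a))) (rpsi (Cpow q (12 * a)))))
                 (rphi (Cpow q (2 * b)))))
          (Cmult (Cmult (Cmult (RtoC 12) (Cpow q ((a + b) / 2)))
                        (Cplus (Cmult (rphi (Cpow q (6 * a))) (rpsi (Cpow q (4 * a))))
                               (Cmult (Cpow q a)
                                      (Cmult (rphi (Cpow q (2 * a))) (rpsi (Cpow q (12 * a)))))))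
                 (rpsi (Cpow q (4 * b)))))
   /\
     is_series
       (fun n => Cmult (RtoC (INR (Nrep a (3 * a) (4 * b) (8 * n + 4)))) (Cpow q n))
       (Cplus (Cplus
          (Cmult (Cmult (Cmult (RtoC 2) (Cpow q ((b - 1) / 2)))
                        (Cmult (rphi (Cpow q (2 * a))) (rphi (Cpow q (6 * a)))))
                 (rpsi (Cpow q (4 * b))))
          (Cmult (Cmult (Cmult (RtoC 8) (Cpow q (2 * a + (b - 1) / 2)))
                        (Cmult (rpsi (Cpow q (4 * a))) (rpsi (Cpow q (12 * a)))))
                 (rpsi (Cpow q (4 * b)))))
          (Cmult (Cmult (Cmult (RtoC 6) (Cpow q ((a - 1) / 2)))
                        (Cplus (Cmult (rphi (Cpow q (6 * a))) (rpsi (Cpow q (4 * a))))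
                               (Cmult (Cpow q a)
                                      (Cmult (rphi (Cpow q (2 * a))) (rpsi (Cpow q (12 * a)))))))
                 (rphi (Cpow q (2 * b)))))).
Proof.
  intros Ha Hb Hodd Hq. split; intros Hpar; split.
  - now apply gf_Nrep_8n_5a.
  - now apply gf_Nrep_8n_7a.
  - now apply gf_Nrep_8n.
  - now apply gf_Nrep_8n_4.
Qed.
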